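(* Let $k,n\ge 1$ and $\theta>0$, and let $P_{n,k}$ be the number of nonempty boxes in the random allocation $\mathbf K_{n,k}$ described in the context. (a) If $k\ge n$, then for $|u|\le 1$ $$\mathbf E\left(u^{P_{n,k}}\right)=\sum_{p=0}^{n-1}\binom{n}{p}u^{n-p}(1-u)^p\,\frac{\sigma_k((n-p)\theta)}{\sigma_k(n\theta)},$$ and $$\mathbf P(P_{n,k}=p)=\binom{n}{p}\sum_{q=1}^{p}(-1)^{p-q}\binom{p}{q}\frac{\sigma_k(q\theta)}{\sigma_k(n\theta)},\qquad p\in\{1,\dots,n\}.$$ Moreover $$\mathbf E(P_{n,k})=n\left(1-\frac{\sigma_k((n-1)\theta)}{\sigma_k(n\theta)}\right),$$ $$\mathrm{Var}(P_{n,k})=n\left(\frac{\sigma_k((n-1)\theta)}{\sigma_k(n\theta)}+(n-1)\frac{\sigma_k((n-2)\theta)}{\sigma_k(n\theta)}-n\left(\frac{\sigma_k((n-1)\theta)}{\sigma_k(n\theta)}\right)^2\right).$$ (b) If $k<n$, the same formula for $\mathbf E(u^{P_{n,k}})$ holds, and $$\mathbf P(P_{n,k}=p)=\binom{n}{p}\sum_{q=1}^{p}(-1)^{p-q}\binom{p}{q}\frac{\sigma_k(q\theta)}{\sigma_k(n\theta)},\qquad p\in\{1,\dots,k\},$$ the support of $P_{n,k}$ being $\{1,\dots,k\}$.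
   Context: Let $(\phi_m)_{m\ge1}$ be nonnegative reals with $\phi_1>0$ such that $\phi(x)=\sum_{m\ge1}\phi_m x^m/m!$ has radius of convergence $x_0\in(0,\infty]$. For $\theta>0$ define the polynomials $\sigma_k(\theta)$ by $e^{\theta\phi(x)}=1+\sum_{k\ge1}\sigma_k(\theta)x^k/k!$, with $\sigma_0\equiv 1$. Equivalently, $\sigma_k(\theta)=\sum_{l=1}^k B_{k,l}(\phi_\bullet)\theta^l$, where $B_{k,l}(\phi_\bullet)=\frac{k!}{l!}[x^k]\phi(x)^l$. Fix $\theta>0$ and integers $n,k\ge1$. Let $\mathbf K_{n,k}=(K_{n,k}(1),\dots,K_{n,k}(n))$ be a random vector in $\mathbb N_0^n$ with $$\mathbf P(\mathbf K_{n,k}=(k_1,\dots,k_n))=\frac{k!}{\sigma_k(n\theta)}\prod_{m=1}^n\frac{\sigma_{k_m}(\theta)}{k_m!}\quad\text{whenever } k_1+\dots+k_n=k.$$ This is the law of $(\xi_1,\dots,\xi_n)$ conditioned on $\xi_1+\dots+\xi_n=k$, where the $\xi_i$ are iid with probability generating function $\mathbf E u^{\xi}=\exp(\theta(\phi(xu)-\phi(x)))$ for some $x\in(0,x_0)$; this law does not depend on $x$. Define $P_{n,k}:=\#\{m:K_{n,k}(m)>0\}$, the number of nonempty boxes. *)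

From HB Require Import structures.
From mathcomp Require Import all_boot all_order all_algebra.
Set Implicit Arguments. Unset Strict Implicit. Unset Printing Implicit Defensive.
Import Order.TTheory GRing.Theory Num.Theory.
Local Open Scope ring_scope.

(* phi : nat -> R gives the coefficients phi_m (m >= 1); phi 0 is ignored.
   phi_trunc phi k = sum_{m=1}^k phi_m x^m / m!, the truncation of phi(x)
   at degree k (enough to compute [x^k] phi(x)^l). *)
Definition phi_trunc (R : fieldType) (phi : nat -> R) (k : nat) : {poly R} :=
  \poly_(i < k.+1) (if i == 0%N then 0 else phi i / (i`!)%:R).

Definition bellB (R : fieldType) (phi : nat -> R) (k l : nat) : R :=
  (k`!)%:R / (l`!)%:R * ((phi_trunc phi k) ^+ l)`_k.

(* sigma_k(theta) = sum_{l=0}^k B_{k,l} theta^l  (B_{k,0} = [k == 0], so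
   sigma_0 = 1 and sigma_k = sum_{l=1}^k B_{k,l} theta^l for k >= 1). *)
Definition sigma (R : fieldType) (phi : nat -> R) (k : nat) (th : R) : R :=
  \sum_(l < k.+1) bellB phi k l * th ^+ l.

Definition outcome (n k : nat) := {ffun 'I_n -> 'I_k.+1}.

Definition Kpmf (R : fieldType) (phi : nat -> R) (th : R) (n k : nat)
  (kv : outcome n k) : R :=
  if (\sum_(m < n) (kv m : nat))%N == k then
    (k`!)%:R / sigma phi k (n%:R * th) *
    \prod_(m < n) (sigma phi (kv m) th / ((kv m : nat)`!)%:R)
  else 0.

Definition Pnk (n k : nat) (kv : outcome n k) : nat := #|[set m | (0 < kv m)%N]|.

Definition Expect (R : fieldType) (phi : nat -> R) (th : R) (n k : nat)
  (X : outcome n k -> R) : R :=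
  \sum_(kv : outcome n k) Kpmf phi th kv * X kv.

Definition ProbP (R : fieldType) (phi : nat -> R) (th : R) (n k p : nat) : R :=
  \sum_(kv : outcome n k | Pnk kv == p) Kpmf phi th kv.

Definition VarP (R : fieldType) (phi : nat -> R) (th : R) (n k : nat) : R :=
  Expect phi th (fun kv : outcome n k => (Pnk kv)%:R ^+ 2)
  - (Expect phi th (fun kv : outcome n k => (Pnk kv)%:R)) ^+ 2.

From HB Require Import structures.
From mathcomp Require Import all_boot all_order all_algebra.
From mathcomp Require Import zify ring.
Set Implicit Arguments. Unset Strict Implicit. Unset Printing Implicit Defensive.
Import Order.TTheory GRing.Theory Num.Theory.
Local Open Scope ring_scope.

(* Let [E] be [exp(theta phi(x))] truncated at degree [k].  Then [sigma_j(q theta) / j!] is the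
   coefficient of [x^j] in [E^q], so [P(K = (k_1, ..., k_n)) = prod_i [x^{k_i}] E / [x^k] E^n]
   and, for any weights [a_i] and [b_i],
   [Expect (prod_i (if K(i) = 0 then a_i else b_i)) = [x^k] prod_i (a_i - b_i + b_i E) / [x^k] E^n].
   Weighting every nonempty box by [u] and expanding [(1 - u + u E)^n] binomially gives the
   generating function; summing over the sets [A] of [p] boxes the weight forcing exactly the
   boxes of [A] to be nonempty gives [C(n, p) [x^k] (E - 1)^p], whence the law of [P_{n,k}];
   the moments follow from [P_{n,k} = sum_m 1(K(m) > 0)].  Everything is computed with
   truncated power series. *)

Section ZeroConstantTerm.
Variables (R : nzSemiRingType) (T : {poly R}).
Hypothesis T0 : T`_0 = 0.

Lemma coef_expr_lt i j : (j < i)%N -> (T ^+ i)`_j = 0.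
Proof.
elim: i j => [//|i IH] j lt_ji; rewrite exprS coefM big1 // => -[[|l] lt_lj] _ /=.
  by rewrite T0 mul0r.
by rewrite IH ?mulr0 //; move: lt_ji lt_lj; rewrite !ltnS; lia.
Qed.

Lemma coef_expr_diag l : (T ^+ l)`_l = T`_1 ^+ l.
Proof.
elim: l => [|l IH]; first by rewrite !expr0 coef1.
rewrite exprS coefM big_ord_recl /= T0 mul0r add0r big_ord_recl /= subSS subn0 IH.
rewrite big1 ?addr0 -?exprS // => i _.
by rewrite coef_expr_lt ?mulr0 //= /bump !leq0n /= !add1n; have := ltn_ord i; lia.
Qed.

End ZeroConstantTerm.

Section Truncation.
Variables (R : nzRingType) (K : nat).

Definition eq_trunc (p q : {poly R}) := forall j, (j <= K)%N -> p`_j = q`_j.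

Lemma eq_trunc_trans p q r : eq_trunc p q -> eq_trunc q r -> eq_trunc p r.
Proof. by move=> epq eqr j le_jK; rewrite epq // eqr. Qed.

Lemma eq_truncM p q p' q' : eq_trunc p p' -> eq_trunc q q' -> eq_trunc (p * q) (p' * q').
Proof.
move=> epp eqq j le_jK; rewrite !coefM; apply: eq_bigr => i _.
by rewrite epp ?eqq //; have := ltn_ord i; lia.
Qed.

Lemma eq_truncX p q m : eq_trunc p q -> eq_trunc (p ^+ m) (q ^+ m).
Proof. by move=> epq; elim: m => [|m IH] //; rewrite !exprS; apply: eq_truncM. Qed.

Lemma eq_trunc_comp (T p q : {poly R}) :
  T`_0 = 0 -> eq_trunc p q -> eq_trunc (p \Po T) (q \Po T).
Proof.
move=> T0 epq j le_jK; apply/eqP; rewrite -subr_eq0 -coefB -comp_polyB.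
rewrite comp_polyE coef_sum big1 // => i _; rewrite coefZ.
have [le_iK|lt_Ki] := leqP i K; first by rewrite coefB epq // subrr mul0r.
by rewrite coef_expr_lt ?mulr0 //; apply: leq_ltn_trans le_jK lt_Ki.
Qed.

End Truncation.

Lemma coef_prod_ffun (R : comNzRingType) n k (q : 'I_n -> {poly R}) :
  (\prod_(i < n) q i)`_k =
  \sum_(kv : {ffun 'I_n -> 'I_k.+1} | (\sum_(i < n) (kv i : nat))%N == k)
     \prod_(i < n) (q i)`_(kv i).
Proof.
pose Q i := \poly_(j < k.+1) (q i)`_j.
have -> : (\prod_(i < n) q i)`_k = (\prod_(i < n) Q i)`_k.
  apply: (big_ind2 (eq_trunc k)) => //; first by move=> *; apply: eq_truncM.
  by move=> i _ j le_jk; rewrite /Q coef_poly ltnS le_jk.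
rewrite /Q; under eq_bigr do rewrite poly_def.
rewrite bigA_distr_bigA coef_sum [RHS]big_mkcond /=; apply: eq_bigr => f _.
under eq_bigr do rewrite -mul_polyC.
rewrite big_split /= -rmorph_prod prodrXr coefCM coefXn eq_sym.
by case: eqP; rewrite ?mulr1 ?mulr0.
Qed.

Lemma fact_neq0 (R : numDomainType) l : (l`!)%:R != 0 :> R.
Proof. by rewrite pnatr_eq0 -lt0n fact_gt0. Qed.

Section TruncatedExp.
Variables (R : numFieldType) (K : nat).

Definition texp (a : R) : {poly R} := \poly_(l < K.+1) (a ^+ l / (l`!)%:R).

Lemma texp0 : texp 0 = 1.
Proof.
apply/polyP=> -[|i]; rewrite coef_poly coef1 expr0n /=; first by rewrite divr1.
by case: ifP; rewrite ?mul0r.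
Qed.

Lemma texpD a b : eq_trunc K (texp a * texp b) (texp (a + b)).
Proof.
move=> j le_jK; rewrite coefM coef_poly ltnS le_jK addrC exprDn mulr_suml.
apply: eq_bigr => i _; have le_ij : (i <= j)%N by rewrite -ltnS.
rewrite !coef_poly ltnS (leq_trans le_ij le_jK) ltnS (leq_trans (leq_subr _ _) le_jK).
have := bin_fact le_ij => /(congr1 (fun m => m%:R : R)); rewrite !natrM => fact_j.
rewrite -mulr_natr -fact_j -mulr_natr.
have binj_neq0 : 'C(j, i)%:R != 0 :> R by rewrite pnatr_eq0 -lt0n bin_gt0.
by field; rewrite !fact_neq0 binj_neq0.
Qed.

Variable T : {poly R}.
Hypothesis T0 : T`_0 = 0.

Definition expT (a : R) : {poly R} := texp a \Po T.

Lemma expT_natM a m : eq_trunc K (expT a ^+ m) (expT (m%:R * a)).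
Proof.
elim: m => [|m IH]; first by rewrite expr0 mul0r /expT texp0 comp_polyC.
rewrite exprS mulrSr mulrDl mul1r addrC.
apply: eq_trunc_trans (eq_truncM (fun _ _ => erefl) IH) _.
by rewrite /expT -comp_polyM; apply: eq_trunc_comp => //; apply: texpD.
Qed.

Lemma coef0_expT a : (expT a)`_0 = 1.
Proof.
by rewrite -horner_coef0 horner_comp horner_coef0 T0 horner_coef0 coef_poly expr0 divr1.
Qed.

Lemma coef_expT a j : (expT a)`_j = \sum_(l < K.+1) a ^+ l / (l`!)%:R * (T ^+ l)`_j.
Proof.
rewrite /expT /texp poly_def linear_sum coef_sum /=; apply: eq_bigr => l _.
by rewrite comp_polyZ comp_Xn_poly coefZ.
Qed.

End TruncatedExp.

Section Sigma.
Variables (R : numFieldType) (phi : nat -> R).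

Lemma phi_trunc_coef0 k : (phi_trunc phi k)`_0 = 0.
Proof. by rewrite coef_poly. Qed.

Lemma sigma_expT k j x : (j <= k)%N ->
  sigma phi j x = (j`!)%:R * (expT k (phi_trunc phi k) x)`_j.
Proof.
move=> le_jk; rewrite coef_expT /sigma mulr_sumr.
rewrite (big_ord_widen _ (fun l => bellB phi j l * x ^+ l) (_ : j.+1 <= k.+1)%N) //.
rewrite [RHS](bigID (fun l : 'I_k.+1 => (l < j.+1)%N)) /= [X in _ = _ + X]big1 ?addr0.
  apply: eq_bigr => l _; have trunc_jk : eq_trunc j (phi_trunc phi j) (phi_trunc phi k).
    by move=> i le_ij; rewrite !coef_poly !ltnS le_ij (leq_trans le_ij le_jk).
  rewrite /bellB (eq_truncX l trunc_jk) //.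
  by field; rewrite fact_neq0.
by move=> l; rewrite -leqNgt => lt_jl; rewrite coef_expr_lt ?phi_trunc_coef0 ?mulr0.
Qed.

Hypothesis phi_ge0 : forall m, (1 <= m)%N -> 0 <= phi m.
Hypothesis phi1_gt0 : 0 < phi 1%N.

Lemma coef_phi_trunc_expr_ge0 k l i : 0 <= ((phi_trunc phi k) ^+ l)`_i.
Proof.
elim: l i => [|l IH] i; first by rewrite expr0 coef1 ler0n.
rewrite exprS coefM; apply: sumr_ge0 => j _; apply: mulr_ge0 => //.
rewrite coef_poly; case: ifP => // _; case: eqP => // /eqP j_neq0.
by apply: divr_ge0; [apply: phi_ge0; rewrite lt0n | apply: ler0n].
Qed.

(* The top Bell term [B_{j,j} = phi_1^j] alone makes [sigma_j] positive. *)
Lemma sigma_gt0 j x : 0 < x -> 0 < sigma phi j x.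
Proof.
move=> x_gt0; rewrite /sigma big_ord_recr /=; apply: ltr_wpDl.
  apply: sumr_ge0 => l _; apply: mulr_ge0; last exact: exprn_ge0 (ltW x_gt0).
  by rewrite mulr_ge0 ?coef_phi_trunc_expr_ge0 ?divr_ge0 ?ler0n.
rewrite /bellB coef_expr_diag ?phi_trunc_coef0 // divff ?fact_neq0 // mul1r.
apply: mulr_gt0; last exact: exprn_gt0.
case: j => [|j]; first by rewrite expr0.
by rewrite exprn_gt0 // coef_poly /= divr1.
Qed.

End Sigma.

Section Occupancy.
Variables n k : nat.

Lemma Pnk_sum (kv : outcome n k) : Pnk kv = (\sum_(i < n) (0 < kv i : nat))%N.
Proof.
rewrite /Pnk -sum1_card big_mkcond /=; apply: eq_bigr => i _.
by rewrite in_set; case: (0 < kv i)%N.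
Qed.

Lemma Pnk_bounds (kv : outcome n k) : (0 < k)%N ->
  (\sum_(i < n) (kv i : nat))%N = k -> (1 <= Pnk kv <= minn n k)%N.
Proof.
move=> k_gt0 sum_k; have Pnk_le_n : (Pnk kv <= n)%N.
  by rewrite /Pnk -[n in (_ <= n)%N]card_ord max_card.
rewrite leq_min Pnk_le_n /= Pnk_sum; apply/andP; split.
  move: k_gt0; rewrite -{1}sum_k !lt0n !sum_nat_eq0; apply: contra => /forallP all0.
  by apply/forallP => i; move: (all0 i); case: (kv i : nat).
by apply: leq_trans (eq_leq sum_k); apply: leq_sum => i _; case: (kv i : nat).
Qed.

(* One ball in each of the boxes [0, ..., p-1], and the [k - p] remaining ones in box [0]. *)
Lemma exists_outcome_Pnk p : (1 <= p <= minn n k)%N ->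
  exists kv : outcome n k, (\sum_(i < n) (kv i : nat))%N = k /\ Pnk kv = p.
Proof.
rewrite leq_min => /and3P [p_gt0 p_le_n p_le_k].
pose v (i : 'I_n) := ((i < p) + (i == 0 :> nat) * (k - p))%N.
have v_lt i : (v i < k.+1)%N by rewrite /v; case: (i < p)%N; case: (i == 0 :> nat); lia.
pose kv : outcome n k := [ffun i => Ordinal (v_lt i)].
have sum_lt_p : (\sum_(i < n) (i < p : nat))%N = p.
  rewrite (eq_bigr (fun i : 'I_n => if (i < p)%N then 1%N else 0%N)); last by move=> i _; case: ifP.
  by rewrite -big_mkcond -(big_ord_widen _ (fun=> 1%N) p_le_n) sum1_card card_ord.
have n_gt0 : (0 < n)%N by apply: leq_trans p_le_n.
exists kv; split.
  rewrite (eq_bigr v) => [|i _]; last by rewrite ffunE.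
  rewrite big_split /= sum_lt_p (bigD1 (Ordinal n_gt0)) //= big1 ?addn0; first lia.
  by move=> i neq_i0; rewrite -[0%N]/(val (Ordinal n_gt0)) val_eqE (negbTE neq_i0).
rewrite Pnk_sum -[RHS]sum_lt_p; apply: eq_bigr => i _; rewrite ffunE /v /=.
by case: (ltnP i p) => //= le_pi; rewrite (_ : (i == 0 :> nat) = false) //; apply/eqP; lia.
Qed.

End Occupancy.

Lemma eq_Expect (R : fieldType) (phi : nat -> R) th n k (X Y : outcome n k -> R) :
  X =1 Y -> Expect phi th X = Expect phi th Y.
Proof. by move=> eXY; apply: eq_bigr => kv _; rewrite eXY. Qed.

Lemma Expect_sum (R : fieldType) (phi : nat -> R) th n k (I : finType) (P : pred I)
    (X : I -> outcome n k -> R) :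
  Expect phi th (fun kv => \sum_(i | P i) X i kv) = \sum_(i | P i) Expect phi th (X i).
Proof. by rewrite /Expect; under eq_bigr do rewrite mulr_sumr; apply: exchange_big. Qed.

Lemma ProbP_Expect (R : fieldType) (phi : nat -> R) th n k p :
  ProbP phi th n k p = Expect phi th (fun kv : outcome n k => (Pnk kv == p)%:R).
Proof.
by rewrite /ProbP /Expect big_mkcond; apply: eq_bigr => kv _; case: eqP; rewrite ?mulr1 ?mulr0.
Qed.

Section Allocation.
Variables (R : numFieldType) (phi : nat -> R) (th : R) (n k : nat).

Let E := expT k (phi_trunc phi k) th.
Let ck q := (E ^+ q)`_k.
Let rho q := sigma phi k (q%:R * th) / sigma phi k (n%:R * th).

Lemma sigma_expT_pow q : sigma phi k (q%:R * th) = (k`!)%:R * ck q.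
Proof. by rewrite (sigma_expT _ _ (leqnn k)) /ck /E (expT_natM (phi_trunc_coef0 _ _)). Qed.

Lemma rhoE q : rho q = ck q / ck n.
Proof. by rewrite /rho !sigma_expT_pow invfM mulrACA mulfV ?fact_neq0 ?mul1r. Qed.

Lemma Kpmf_coef (kv : outcome n k) : Kpmf phi th kv =
  if (\sum_(i < n) (kv i : nat))%N == k then (\prod_(i < n) E`_(kv i)) / ck n else 0.
Proof.
rewrite /Kpmf; case: ifP => // _; rewrite sigma_expT_pow invfM mulrA mulfV ?fact_neq0 // mul1r.
rewrite mulrC; congr (_ * _); apply: eq_bigr => i _.
by rewrite (sigma_expT _ _ (_ : (kv i <= k)%N)) 1?mulrC ?mulKf ?fact_neq0 // -ltnS.
Qed.

Lemma Expect_prod_box (a b : 'I_n -> R) :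
  Expect phi th (fun kv : outcome n k => \prod_(i < n) (if kv i == 0 :> nat then a i else b i))
  = (\prod_(i < n) ((a i - b i)%:P + b i *: E))`_k / ck n.
Proof.
rewrite /Expect coef_prod_ffun mulr_suml [RHS]big_mkcond /=; apply: eq_bigr => kv _.
rewrite Kpmf_coef; case: ifP => _; last by rewrite !mul0r.
rewrite mulrAC -big_split /=; congr (_ * _); apply: eq_bigr => i _.
rewrite coefD coefC coefZ; case: eqP => [->|_]; last by rewrite add0r mulrC.
by rewrite coef0_expT ?phi_trunc_coef0 //; ring.
Qed.

Definition box_weight (A : {set 'I_n}) (al be : R) (kv : outcome n k) : R :=
  \prod_(i < n) (if kv i == 0 :> nat then (if i \in A then 0 else al)
                 else (if i \in A then 1 else be)).

Lemma Expect_box_weight A al be :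
  Expect phi th (box_weight A al be)
  = ((E - 1) ^+ #|A| * ((al - be)%:P + be *: E) ^+ (n - #|A|))`_k / ck n.
Proof.
rewrite Expect_prod_box (bigID (mem A)) /= (eq_bigr (fun=> E - 1)); last first.
  by move=> i ->; rewrite sub0r scale1r addrC polyCN polyC1.
rewrite prodr_const (eq_bigr (fun=> (al - be)%:P + be *: E)); last by move=> i /negbTE ->.
rewrite prodr_const; suff -> : (n - #|A| = #|[predC A]|)%N by [].
by have := cardC A; rewrite card_ord; lia.
Qed.

Lemma box_weight1 m kv : box_weight [set m] 1 1 kv = (0 < kv m)%N%:R.
Proof.
rewrite /box_weight (bigD1 m) //= in_set1 eqxx big1 ?mulr1 => [|i /negbTE i_neq_m].
  by rewrite lt0n; case: eqP.
by rewrite in_set1 i_neq_m; case: eqP.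
Qed.

Lemma box_weightU A B kv :
  box_weight A 1 1 kv * box_weight B 1 1 kv = box_weight (A :|: B) 1 1 kv.
Proof.
rewrite /box_weight -big_split /=; apply: eq_bigr => i _; rewrite in_setU.
by case: eqP; case: (i \in A); case: (i \in B); rewrite /= ?mulr1 ?mul1r ?mulr0.
Qed.

Lemma box_weight10 A kv : box_weight A 1 0 kv = ([set m | (0 < kv m)%N] == A)%:R.
Proof.
case: eqP => [<-|neqA].
  by rewrite /box_weight big1 // => i _; rewrite in_set lt0n; case: eqP.
have [i diff_i] : exists i, (i \in [set m | (0 < kv m)%N]) != (i \in A).
  by apply/existsP; rewrite -negb_forall; apply: contra_notN neqA => /forallP eqA;
     apply/setP => i; apply/eqP.
rewrite /box_weight (bigD1 i) //=; move: diff_i; rewrite in_set lt0n.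
by case: (kv i == 0 :> nat); case: (i \in A) => //= _; rewrite mul0r.
Qed.

Lemma Pnk_box_weight kv : (Pnk kv)%:R = \sum_(m < n) box_weight [set m] 1 1 kv.
Proof.
rewrite /Pnk -sum1_card natr_sum big_mkcond /=; apply: eq_bigr => m _.
by rewrite box_weight1 in_set; case: ifP.
Qed.

Lemma eq_Pnk_box_weight p kv :
  (Pnk kv == p)%:R = \sum_(A : {set 'I_n} | #|A| == p) box_weight A 1 0 kv.
Proof.
under eq_bigr do rewrite box_weight10.
have [Pkv_p|Pkv_neq_p] := eqVneq (Pnk kv) p.
  rewrite (bigD1 [set m | (0 < kv m)%N]) /= ?eqxx; last by rewrite -Pkv_p.
  by rewrite big1 ?addr0 // => A /andP [_]; rewrite eq_sym => /negbTE ->.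
rewrite big1 // => A /eqP cardA; case: eqP => // nonempty_A.
by case/eqP: Pkv_neq_p; rewrite /Pnk nonempty_A.
Qed.

Lemma expr_Pnk u kv : u ^+ Pnk kv = box_weight set0 1 u kv.
Proof.
rewrite /Pnk -prodr_const big_mkcond /=; apply: eq_bigr => i _.
by rewrite in_set0 in_set lt0n; case: eqP.
Qed.

Hypothesis k_gt0 : (0 < k)%N.

Lemma Expect_expr_Pnk u :
  Expect phi th (fun kv : outcome n k => u ^+ Pnk kv) =
  \sum_(p < n) ('C(n, p))%:R * u ^+ (n - p) * (1 - u) ^+ p * rho (n - p).
Proof.
rewrite (eq_Expect _ _ (expr_Pnk u)) Expect_box_weight cards0 expr0 mul1r subn0.
rewrite addrC exprDn coef_sum big_ord_recr /=.
rewrite subnn expr0 mul1r -polyC_exp coefMn coefC (gtn_eqF k_gt0) mul0rn addr0 mulr_suml.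
apply: eq_bigr => p _; rewrite exprZn -polyC_exp coefMn coefMC coefZ rhoE.
by rewrite -mulr_natl /ck; ring.
Qed.

Lemma ProbP_Pnk p :
  ProbP phi th n k p = ('C(n, p))%:R *
    \sum_(1 <= q < p.+1) (-1) ^+ (p - q) * ('C(p, q))%:R * rho q.
Proof.
rewrite ProbP_Expect (eq_Expect _ _ (eq_Pnk_box_weight p)) Expect_sum.
rewrite (eq_bigr (fun A => ((E - 1) ^+ p)`_k / ck n)); last first.
  by move=> A /eqP <-; rewrite Expect_box_weight subr0 scale0r addr0 polyC1 expr1n mulr1.
rewrite sumr_const (_ : #|_| = 'C(n, p)); last first.
  by rewrite -[n in 'C(n, _)]card_ord -card_draws; apply: eq_card => A; rewrite inE.
rewrite addrC -polyC1 -polyCN exprDn coef_sum big_ord_recl /= subn0 expr0 mulr1.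
rewrite -polyC_exp coefMn coefC (gtn_eqF k_gt0) mul0rn add0r big_add1 /= big_mkord.
rewrite mulr_suml mulr_sumr -sumrMnl; apply: eq_bigr => i _.
rewrite -polyC_exp coefMn coefCM rhoE /bump /= add1n.
by rewrite -mulr_natl -mulr_natr /ck; ring.
Qed.

Hypothesis phi_ge0 : forall m, (1 <= m)%N -> 0 <= phi m.
Hypothesis phi1_gt0 : 0 < phi 1%N.
Hypothesis th_gt0 : 0 < th.
Hypothesis n_gt0 : (0 < n)%N.

Lemma ck_neq0 q : (0 < q)%N -> ck q != 0.
Proof.
move=> q_gt0; have q_th_gt0 : 0 < q%:R * th by rewrite mulr_gt0 ?ltr0n.
have := sigma_gt0 phi_ge0 phi1_gt0 k q_th_gt0.
by rewrite sigma_expT_pow pmulr_rgt0 ?ltr0n ?fact_gt0 // => /lt0r_neq0.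
Qed.

Lemma Expect_nonempty_box m : Expect phi th (box_weight [set m] 1 1) = 1 - rho n.-1.
Proof.
rewrite Expect_box_weight cards1 subrr polyC0 add0r scale1r expr1 mulrBl mul1r.
by rewrite -exprS subn1 prednK // coefB mulrBl divff ?ck_neq0 // rhoE.
Qed.

Lemma Expect_nonempty_pair i j : i != j ->
  Expect phi th (box_weight [set i; j] 1 1) = 1 - 2%:R * rho n.-1 + rho n.-2.
Proof.
move=> neq_ij; have card_ij : #|[set i; j]| = 2%N by rewrite cards2 neq_ij.
have [m n_eq] : exists m, n = m.+2.
  by exists n.-2; have := max_card (mem [set i; j]); rewrite card_ij card_ord; lia.
have := ck_neq0 n_gt0; rewrite Expect_box_weight card_ij subrr polyC0 add0r scale1r !rhoE.
rewrite n_eq subn2 /= (_ : (E - 1) ^+ 2 * E ^+ m = E ^+ m.+2 - E ^+ m.+1 *+ 2 + E ^+ m).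
  by rewrite coefD coefB mulr2n coefD /ck => ck_neq0; field.
by rewrite !exprS; ring.
Qed.

Lemma Expect_Pnk :
  Expect phi th (fun kv : outcome n k => (Pnk kv)%:R) = n%:R * (1 - rho n.-1).
Proof.
rewrite (eq_Expect _ _ Pnk_box_weight) Expect_sum.
by under eq_bigr do rewrite Expect_nonempty_box; rewrite sumr_const card_ord mulr_natl.
Qed.

Lemma Expect_Pnk2 : Expect phi th (fun kv : outcome n k => (Pnk kv)%:R ^+ 2) =
  n%:R * (1 - rho n.-1) + n%:R * (n.-1)%:R * (1 - 2%:R * rho n.-1 + rho n.-2).
Proof.
have Pnk2 (kv : outcome n k) :
    (Pnk kv)%:R ^+ 2 = \sum_(i < n) \sum_(j < n) box_weight [set i; j] 1 1 kv.
  rewrite Pnk_box_weight expr2 mulr_suml; apply: eq_bigr => i _.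
  by rewrite mulr_sumr; apply: eq_bigr => j _; rewrite box_weightU.
rewrite (eq_Expect _ _ Pnk2) Expect_sum (eq_bigr (fun=> (1 - rho n.-1) +
  (n.-1)%:R * (1 - 2%:R * rho n.-1 + rho n.-2))) => [|i _]; last first.
  rewrite Expect_sum (bigD1 i) //= setUid Expect_nonempty_box; congr (_ + _).
  under eq_bigr => j neq_ji do rewrite Expect_nonempty_pair 1?eq_sym //.
  rewrite sumr_const (_ : #|_| = n.-1) ?mulr_natl //.
  by have := cardC1 i; rewrite card_ord.
by rewrite sumr_const card_ord -[_ *+ n]mulr_natl mulrDr mulrA.
Qed.

Lemma VarP_Pnk :
  VarP phi th n k = n%:R * (rho n.-1 + (n.-1)%:R * rho n.-2 - n%:R * rho n.-1 ^+ 2).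
Proof.
rewrite /VarP Expect_Pnk2 Expect_Pnk.
have -> : (n.-1)%:R = n%:R - 1 :> R by rewrite -[in RHS](prednK n_gt0) -natr1 addrK.
by ring.
Qed.

Lemma Kpmf_gt0 (kv : outcome n k) :
  (\sum_(i < n) (kv i : nat))%N = k -> 0 < Kpmf phi th kv.
Proof.
move=> sum_k; have sigma_th_gt0 j := sigma_gt0 phi_ge0 phi1_gt0 j th_gt0.
have n_th_gt0 : 0 < n%:R * th by rewrite mulr_gt0 ?ltr0n.
rewrite /Kpmf sum_k eqxx mulr_gt0 ?divr_gt0 ?ltr0n ?fact_gt0 ?sigma_gt0 //.
by apply: prodr_gt0 => i _; rewrite divr_gt0 ?ltr0n ?fact_gt0.
Qed.

Lemma Kpmf_ge0 (kv : outcome n k) : 0 <= Kpmf phi th kv.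
Proof.
have [/Kpmf_gt0/ltW //|sum_neq_k] := eqVneq (\sum_(i < n) (kv i : nat))%N k.
by rewrite /Kpmf (negbTE sum_neq_k).
Qed.

Lemma ProbP_gt0 p : (0 < ProbP phi th n k p) = (1 <= p <= minn n k)%N.
Proof.
apply/idP/idP => [|/exists_outcome_Pnk [kv [sum_k Pkv_p]]].
  apply: contraLR => p_out; rewrite /ProbP big1 ?ltxx // => kv /eqP Pkv_p.
  have [/(Pnk_bounds k_gt0)|sum_neq_k] := eqVneq (\sum_(i < n) (kv i : nat))%N k.
    by rewrite Pkv_p (negbTE p_out).
  by rewrite /Kpmf (negbTE sum_neq_k).
rewrite /ProbP (bigD1 kv) ?Pkv_p //= ltr_pwDl ?Kpmf_gt0 //.
by apply: sumr_ge0 => kv' _; apply: Kpmf_ge0.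
Qed.

End Allocation.

Theorem proposition1 (R : realFieldType) (phi : nat -> R) (th : R) (n k : nat)
  (phi_nonneg : forall m, (1 <= m)%N -> 0 <= phi m)
  (phi1_pos : 0 < phi 1%N)
  (phi_radius : exists r : R, 0 < r /\
       exists C : R, forall m, phi m * r ^+ m / (m`!)%:R <= C)
  (th_pos : 0 < th) (n_ge1 : (1 <= n)%N) (k_ge1 : (1 <= k)%N) :
  let sig := fun q : nat => sigma phi k (q%:R * th) / sigma phi k (n%:R * th) in
  let pgf := fun u : R => \sum_(p < n) ('C(n, p))%:R * u ^+ (n - p) * (1 - u) ^+ p * sig (n - p)%N in
  let pmf := fun p : nat => ('C(n, p))%:R *
       \sum_(1 <= q < p.+1) (-1) ^+ (p - q) * ('C(p, q))%:R * sig q in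
  ((n <= k)%N ->
     (forall u : R, `|u| <= 1 ->
        Expect phi th (fun kv : outcome n k => u ^+ Pnk kv) = pgf u)
  /\ (forall p : nat, (1 <= p <= n)%N -> ProbP phi th n k p = pmf p)
  /\ Expect phi th (fun kv : outcome n k => (Pnk kv)%:R) = n%:R * (1 - sig n.-1)
  /\ VarP phi th n k =
       n%:R * (sig n.-1 + (n.-1)%:R * sig n.-2 - n%:R * sig n.-1 ^+ 2))
  /\
  ((k < n)%N ->
     (forall u : R, `|u| <= 1 ->
        Expect phi th (fun kv : outcome n k => u ^+ Pnk kv) = pgf u)
  /\ (forall p : nat, (1 <= p <= k)%N -> ProbP phi th n k p = pmf p)
  /\ (forall p : nat, 0 < ProbP phi th n k p <-> (1 <= p <= k)%N)).
Proof.
move=> sig pgf pmf.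
have pgfE u : Expect phi th (fun kv : outcome n k => u ^+ Pnk kv) = pgf u.
  exact: Expect_expr_Pnk.
have pmfE p : ProbP phi th n k p = pmf p by apply: ProbP_Pnk.
split=> [n_le_k | k_lt_n]; split=> [u _ //|]; split=> [p _ //|].
  by rewrite Expect_Pnk ?VarP_Pnk.
by move=> p; rewrite ProbP_gt0 // (minn_idPr (ltnW k_lt_n)).
Qed.
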